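(* In the setting below, if $\{\mathbb G(t)\}$ is uniformly strongly connected, then the sequence of stochastic matrices $\{S(t)\}$ has a unique absolute probability sequence $\{\pi(t)\}$, and it is given by $\pi_i(t)=\frac{y_i(t)}{n}$ for all $i\in\mathcal V$ and $t\ge0$. In particular $y^\top(t)=y^\top(t+1)S(t)$ for all $t\ge0$.
   Context: Setting. Fix $n$ agents, $\mathcal V=\{1,\dots,n\}$. For each $t\in\{0,1,2,\dots\}$, $\mathbb G(t)=(\mathcal V,\mathcal E(t))$ is a directed graph containing a self-arc $(i,i)$ at every vertex; $\mathcal N_i(t)=\{j:(j,i)\in\mathcal E(t)\}$ and $\mathcal N_i^-(t)=\{k:(i,k)\in\mathcal E(t)\}$. Weights $w_{ij}(t)$ are positive for $j\in\mathcal N_i(t)$ and $w_{ij}(t)=0$ otherwise, and satisfy: there is $\beta>0$ with $w_{ij}(t)\ge\beta$ whenever $j\in\mathcal N_i(t)$, and $\sum_{j\in\mathcal N_i^-(t)}w_{ji}(t)=1$ for all $i,t$. The sequence $\{\mathbb G(t)\}$ is uniformly strongly connected if there is a positive integer $L$ such that for every $t\ge0$ the directed graph with vertex set $\mathcal V$ and edge set $\bigcup_{k=t}^{t+L-1}\mathcal E(k)$ is strongly connected. The $y$-iteration of push-sum: $y_i(t+1)=\sum_{j}w_{ij}(t)y_j(t)$, $y_i(0)=1$. Define the row-stochastic matrix $S(t)$ with entries $s_{ij}(t)=w_{ij}(t)y_j(t)/y_i(t+1)$. Definition: for a sequence $\{S(t)\}_{t\ge0}$ of (row) stochastic matrices,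 a sequence of stochastic vectors $\{\pi(t)\}_{t\ge0}$ (nonnegative entries summing to one) is an absolute probability sequence if $\pi^\top(t)=\pi^\top(t+1)S(t)$ for all $t\ge0$. *)

From mathcomp Require Import all_boot all_order all_algebra.
Set Implicit Arguments. Unset Strict Implicit. Unset Printing Implicit Defensive.
Import Order.TTheory GRing.Theory Num.Theory.
Local Open Scope ring_scope.

(* A time-varying directed graph on 'I_n: E t j i means (j,i) \in E(t). *)
Definition graph_seq (n : nat) := nat -> rel 'I_n.

Definition union_rel (n : nat) (E : graph_seq n) (t L : nat) : rel 'I_n :=
  fun j i => [exists k : 'I_L, E (t + k)%N j i].

Definition strongly_connected (n : nat) (e : rel 'I_n) : Prop :=
  forall i j : 'I_n, connect e i j.

Definition uniformly_strongly_connected (n : nat) (E : graph_seq n) : Prop :=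
  exists L : nat, (0 < L)%N /\
    forall t : nat, strongly_connected (union_rel E t L).

Fixpoint push_sum_y (R : ringType) (n : nat)
  (w : nat -> 'I_n -> 'I_n -> R) (t : nat) : 'I_n -> R :=
  match t with
  | 0 => fun _ => 1
  | t'.+1 => fun i => \sum_j w t' i j * push_sum_y w t' j
  end.

Definition S_mat (R : fieldType) (n : nat)
  (w : nat -> 'I_n -> 'I_n -> R) (t : nat) : 'I_n -> 'I_n -> R :=
  fun i j => w t i j * push_sum_y w t j / push_sum_y w t.+1 i.

Definition stochastic_vector (R : numDomainType) (n : nat) (p : 'I_n -> R) : Prop :=
  (forall i, 0 <= p i) /\ \sum_i p i = 1.

Definition absolute_probability_sequence (R : numDomainType) (n : nat)
  (S : nat -> 'I_n -> 'I_n -> R) (pi : nat -> 'I_n -> R) : Prop :=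
  (forall t, stochastic_vector (pi t)) /\
  (forall t j, pi t j = \sum_i pi t.+1 i * S t i j).

From mathcomp Require Import all_boot all_order all_algebra.
From mathcomp Require Import zify ring lra.
From mathcomp Require Import reals.
Import Order.TTheory GRing.Theory Num.Theory.
Set Implicit Arguments. Unset Strict Implicit.

(* Write y(t) for the push-sum weights and W(t) = (w_ij(t)), a nonnegative
   column-stochastic matrix whose positive entries are at least beta.
   Existence and the identity y(t) = y(t+1) S(t) are direct computations:
   column-stochasticity gives sum_i y_i(t) = n and sum_i w_ij(t) = 1.
   For uniqueness let pi be any absolute probability sequence and put
   z_i(t) = pi_i(t) / y_i(t).  Then z(t) = W(t)^T z(t+1), i.e. every z_j(t)
   is a convex combination of the z_i(t+1): a backward consensus iteration.
   Uniform strong connectivity (window L) yields time-respecting walks of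
   length D = n L between any two agents (the set of agents that can reach a
   fixed agent grows in every window), hence
   - the spread max z - min z contracts by the factor 1 - beta^D over D steps,
   - y_i(t + D) >= beta^D, so that z(t + D) lies in [0, beta^-D].
   The spread of z(t) is thus below beta^-D (1 - beta^D)^m for all m, hence 0;
   z(t) is constant and sum_i pi_i(t) = 1 forces pi(t) = y(t) / n. *)

Lemma connect_cross (T : finType) (e : rel T) (A : {set T}) x y :
  connect e x y -> x \notin A -> y \in A ->
  exists u v, [/\ e u v, u \notin A & v \in A].
Proof.
move=> /connectP [p e_p ->]; elim: p x e_p => [|v p IH] x /=.
  by move=> _ /negP.
case/andP=> exv e_p xA; case vA: (v \in A).
  by move=> _; exists x, v.
by apply: IH => //; rewrite vA.
Qed.

Section Reachability.
Variables (n : nat) (E : graph_seq n).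
Hypothesis self_loop : forall t i, E t i i.

(* reach d r j k: a walk of d steps from j to k whose s-th step (s < d) is an
   edge of the graph at time r + s. *)
Fixpoint reach (d r : nat) (j k : 'I_n) : bool :=
  if d is d'.+1 then [exists j1, E r j j1 && reach d' r.+1 j1 k] else j == k.

(* Self-loops let a walk wait: a walk starting later can be started earlier. *)
Lemma reach_wait q d r j k : reach d (r + q) j k -> reach (q + d) r j k.
Proof.
elim: q r => [|q IH] r /=; first by rewrite addn0.
rewrite addnS -addSn => /IH walk; apply/existsP; exists j; by rewrite self_loop walk.
Qed.

Lemma reach_refl d r k : reach d r k k.
Proof.
by elim: d r => [|d IH] r /=; [rewrite eqxx | apply/existsP; exists k; rewrite self_loop IH].
Qed.

Definition reach_set d r k : {set 'I_n} := [set j | reach d r j k].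

(* An edge of the union graph over the window [r, r + L) can be prepended to a
   walk starting at time r + L, waiting before and after it. *)
Lemma reach_window_step L d r u v k :
  union_rel E r L u v -> reach d (r + L) v k -> reach (L + d) r u k.
Proof.
case/existsP=> q Euv Hv; have lt_qL := ltn_ord q.
have Hv' : reach ((L - q.+1) + d) (r + q).+1 v k.
  by apply: reach_wait; have -> : ((r + q).+1 + (L - q.+1) = r + L) by lia.
have Hu : reach ((L - q.+1) + d).+1 (r + q) u k.
  by apply/existsP; exists v; rewrite Euv.
by have := reach_wait Hu; have -> : (q + ((L - q.+1) + d).+1 = L + d) by lia.
Qed.

Lemma reach_set_grow L d r k :
  strongly_connected (union_rel E r L) ->
  #|reach_set d (r + L) k| < n ->
  #|reach_set d (r + L) k| < #|reach_set (L + d) r k|.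
Proof.
set A := reach_set d (r + L) k; set B := reach_set (L + d) r k => conn small.
have AB : A \subset B by apply/subsetP => j; rewrite !inE; apply: reach_wait.
have /subsetPn [x _ xA] : ~~ ([set: 'I_n] \subset A).
  by apply: contraTN small => /subset_leq_card; rewrite cardsT card_ord leqNgt.
have kA : k \in A by rewrite inE reach_refl.
have [u [v [euv uA vA]]] := connect_cross (conn x k) xA kA.
have uB : u \in B by rewrite /B inE; rewrite inE in vA; exact: reach_window_step euv vA.
suff : #|u |: A| <= #|B| by rewrite cardsU1 uA.
by apply: subset_leq_card; rewrite subUset sub1set uB.
Qed.

Lemma reach_set_card L k : (forall t, strongly_connected (union_rel E t L)) ->
  forall m r, minn n m.+1 <= #|reach_set (m * L) r k|.
Proof.
move=> conn; elim=> [|m IH] r.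
  apply: leq_trans (geq_minr _ _) _; apply/card_gt0P; exists k.
  by rewrite inE reach_refl.
rewrite mulSn; have IHr := IH (r + L).
have AB : reach_set (m * L) (r + L) k \subset reach_set (L + m * L) r k.
  by apply/subsetP => j; rewrite !inE; apply: reach_wait.
have [small | large] := ltnP #|reach_set (m * L) (r + L) k| n.
  have := reach_set_grow (conn r) small; lia.
by have := subset_leq_card AB; lia.
Qed.

Lemma reach_full L : (forall t, strongly_connected (union_rel E t L)) ->
  forall r j k, reach (n * L) r j k.
Proof.
move=> conn r j k; have := reach_set_card k conn n r.
rewrite (minn_idPl (leqnSn n)) -[X in (X <= _)]card_ord => large.
have full : reach_set (n * L) r k = setT.
  by apply/eqP; rewrite eqEcard subsetT cardsT.
by move/setP/(_ j): full; rewrite !inE.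
Qed.

End Reachability.

Local Open Scope ring_scope.

Lemma ler_sum_term (R : numDomainType) n (f : 'I_n -> R) i :
  (forall j, 0 <= f j) -> f i <= \sum_j f j.
Proof.
move=> f_ge0; rewrite (bigD1 i) //= lerDl; apply: sumr_ge0 => j _; exact: f_ge0.
Qed.

Lemma ord_argmin (R : realDomainType) n (f : 'I_n -> R) : (0 < n)%N ->
  exists k, forall i, f k <= f i.
Proof.
case: n f => // n f _.
by case: (@arg_minP _ R 'I_n.+1 ord0 xpredT f isT) => k _ H; exists k => i; exact: H.
Qed.

Section ColumnStochastic.
Variables (R : realFieldType) (n : nat) (E : graph_seq n).
Variables (w : nat -> 'I_n -> 'I_n -> R) (beta : R).
Hypothesis w_ge0 : forall t i j, 0 <= w t i j.
Hypothesis w_col : forall t j, \sum_i w t i j = 1.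
Hypothesis w_lb : forall t i j, E t j i -> beta <= w t i j.
Hypothesis beta_ge0 : 0 <= beta.

Section BackwardRecursion.
Variable z : nat -> 'I_n -> R.
Hypothesis z_rec : forall t j, z t j = \sum_i w t i j * z t.+1 i.

Lemma backward_shift m t j : z t j - m = \sum_i w t i j * (z t.+1 i - m).
Proof.
rewrite z_rec; under [RHS]eq_bigr do rewrite mulrBr.
by rewrite sumrB -mulr_suml w_col mul1r.
Qed.

Lemma backward_min m d r :
  (forall i, m <= z (r + d)%N i) -> forall i, m <= z r i.
Proof.
elim: d r => [|d IH] r; first by rewrite addn0.
rewrite addnS -addSn => /IH m_le i; rewrite -subr_ge0 backward_shift.
by apply: sumr_ge0 => k _; rewrite mulr_ge0 ?subr_ge0.
Qed.

Lemma backward_reach m d r j k : (forall i, m <= z (r + d)%N i) ->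
  reach E d r j k -> beta ^+ d * (z (r + d)%N k - m) <= z r j - m.
Proof.
elim: d r j => [|d IH] r j m_le /=; first by move/eqP->; rewrite expr0 mul1r addn0.
case/existsP=> j1 /andP[Ej reach_j1]; rewrite addnS -addSn in m_le *.
have m_le1 := backward_min m_le.
rewrite [z r j - m]backward_shift; apply: le_trans (ler_sum_term j1 _); last first.
  by move=> i; rewrite mulr_ge0 ?subr_ge0.
rewrite exprS -mulrA; apply: ler_pM; [by [] | | exact: w_lb | exact: IH].
by rewrite mulr_ge0 ?exprn_ge0 ?subr_ge0.
Qed.

End BackwardRecursion.

(* Dually, an upper bound propagates back (apply backward_min to -z). *)
Lemma backward_max z : (forall t j, z t j = \sum_i w t i j * z t.+1 i) ->
  forall M d r, (forall i, z (r + d)%N i <= M) -> forall i, z r i <= M.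
Proof.
move=> z_rec M d r le_M i; rewrite -lerN2.
have negz_rec t j : - z t j = \sum_i w t i j * - z t.+1 i.
  by rewrite z_rec -sumrN; apply: eq_bigr => k _; rewrite mulrN.
by apply: (backward_min negz_rec) => k; rewrite lerN2.
Qed.

Lemma forward_reach y : (forall t i, 0 <= y t i) ->
  (forall t i, y t.+1 i = \sum_j w t i j * y t j) ->
  forall d r j k, reach E d r j k -> beta ^+ d * y r j <= y (r + d)%N k.
Proof.
move=> y_ge0 y_rec; elim=> [|d IH] r j k /=.
  by move/eqP->; rewrite expr0 mul1r addn0.
case/existsP=> j1 /andP[Ej reach_j1].
have step : beta * y r j <= y r.+1 j1.
  rewrite y_rec; apply: le_trans (ler_sum_term j _); last first.
    by move=> i; apply: mulr_ge0.
  by apply: ler_wpM2r => //; exact: w_lb.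
rewrite exprSr -mulrA addnS -addSn; apply: le_trans (IH _ _ _ reach_j1).
by apply: ler_wpM2l => //; exact: exprn_ge0.
Qed.

Hypothesis n_gt0 : (0 < n)%N.
Hypothesis beta_le1 : beta <= 1.
Variable D : nat.
Hypothesis reach_D : forall r j k, reach E D r j k.

Lemma backward_contract z : (forall t j, z t j = \sum_i w t i j * z t.+1 i) ->
  forall t delta, (forall a b, z (t + D)%N a - z (t + D)%N b <= delta) ->
  forall a b, z t a - z t b <= (1 - beta ^+ D) * delta.
Proof.
move=> z_rec t delta spread a b.
have [kM le_M] := ord_argmin (fun i => - z (t + D)%N i) n_gt0.
have [km le_m] := ord_argmin (z (t + D)%N) n_gt0.
have za_le : z t a <= z (t + D)%N kM.
  by apply: (backward_max z_rec (d := D)) => i; rewrite -lerN2 le_M.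
have zb_ge := backward_reach z_rec le_m (reach_D t b kM).
have g_ge0 : 0 <= beta ^+ D by exact: exprn_ge0.
have g_le1 : beta ^+ D <= 1 by exact: exprn_ile1.
have Mm_le := spread kM km.
have : (1 - beta ^+ D) * (z (t + D)%N kM - z (t + D)%N km)
         <= (1 - beta ^+ D) * delta by apply: ler_wpM2l; rewrite ?subr_ge0.
nra.
Qed.

Lemma backward_contract_iter z :
  (forall t j, z t j = \sum_i w t i j * z t.+1 i) ->
  forall m t delta, (forall a b, z (t + m * D)%N a - z (t + m * D)%N b <= delta) ->
  forall a b, z t a - z t b <= (1 - beta ^+ D) ^+ m * delta.
Proof.
move=> z_rec; elim=> [|m IH] t delta spread; first by rewrite expr0 mul1r -[t]addn0.
rewrite mulSn addnA in spread; rewrite exprS -mulrA.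
exact: backward_contract z_rec t _ (IH _ _ spread).
Qed.

End ColumnStochastic.

Lemma bernoulli_ineq (R : realFieldType) (g : R) m : 0 <= g -> g <= 1 ->
  (1 - g) ^+ m * (1 + m%:R * g) <= 1.
Proof.
move=> g_ge0 g_le1; elim: m => [|m IH]; first by rewrite expr0 mul0r addr0 mulr1.
have q_ge0 : 0 <= (1 - g) ^+ m by apply: exprn_ge0; rewrite subr_ge0.
apply: le_trans IH; rewrite exprSr -mulrA; apply: ler_wpM2l => //.
have m_ge0 : 0 <= m%:R :> R by []. rewrite -natr1; nra.
Qed.

Lemma geometric_squeeze (R : archiRealFieldType) (s C g : R) : 0 < g -> g <= 1 ->
  (forall m, s <= (1 - g) ^+ m * C) -> s <= 0.
Proof.
move=> g_gt0 g_le1 s_le; rewrite leNgt; apply/negP => s_gt0.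
have C_ge0 : 0 <= C by apply: le_trans (ltW s_gt0) _; have := s_le 0%N; rewrite expr0 mul1r.
have sg_gt0 : 0 < s * g by apply: mulr_gt0.
have := archi_boundP (divr_ge0 C_ge0 (ltW sg_gt0)); set m := Num.Def.archi_bound _.
rewrite ltr_pdivrMr // => C_lt.
have bern := bernoulli_ineq m (ltW g_gt0) g_le1.
have q_ge0 : 0 <= (1 - g) ^+ m by apply: exprn_ge0; rewrite subr_ge0.
have m_ge0 : 0 <= m%:R :> R by [].
have : s * (1 + m%:R * g) <= C.
  apply: le_trans (_ : (1 - g) ^+ m * C * (1 + m%:R * g) <= C).
    by apply: ler_wpM2r; [nra | exact: s_le].
  by rewrite mulrAC -{2}[C]mul1r; exact: ler_wpM2r.
nra.
Qed.

Section PushSum.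
Variables (R : realType) (n : nat) (E : graph_seq n).
Variable w : nat -> 'I_n -> 'I_n -> R.
Hypothesis self_loop : forall t i, E t i i.
Hypothesis w_pos : forall t i j, E t j i -> 0 < w t i j.
Hypothesis w_zero : forall t i j, ~~ E t j i -> w t i j = 0.
Hypothesis w_colE : forall t i, \sum_(k | E t i k) w t k i = 1.
Hypothesis n_gt0 : (0 < n)%N.

Local Notation y := (push_sum_y w).

Lemma push_weight_ge0 t i j : 0 <= w t i j.
Proof. by case: (boolP (E t j i)) => [/w_pos/ltW | /w_zero ->]. Qed.

Lemma push_weight_col t j : \sum_i w t i j = 1.
Proof.
rewrite -(w_colE t j) [RHS]big_mkcond; apply: eq_bigr => i _.
by case: ifP => // /negbT /w_zero ->.
Qed.

(* Thanks to the self-loops, push-sum weights stay positive. *)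
Lemma push_sum_y_gt0 t i : 0 < y t i.
Proof.
elim: t i => [|t IH] i /=; first exact: ltr01.
have term_ge0 j : 0 <= w t i j * y t j by rewrite mulr_ge0 ?push_weight_ge0 ?ltW.
apply: lt_le_trans (ler_sum_term i term_ge0).
exact: mulr_gt0 (w_pos (self_loop t i)) (IH i).
Qed.

Lemma push_sum_y_total t : \sum_i y t i = n%:R.
Proof.
elim: t => [|t IH] /=; first by rewrite sumr_const card_ord.
rewrite exchange_big -IH; apply: eq_bigr => j _.
by rewrite -mulr_suml push_weight_col mul1r.
Qed.

Lemma push_sum_y_balance t j : y t j = \sum_i y t.+1 i * S_mat w t i j.
Proof.
rewrite /S_mat; under eq_bigr do rewrite mulrC divfK ?gt_eqF ?push_sum_y_gt0 //.
by rewrite -mulr_suml push_weight_col mul1r.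
Qed.

Lemma push_sum_absolute :
  absolute_probability_sequence (S_mat w) (fun t i => y t i / n%:R).
Proof.
have n_neq0 : n%:R != 0 :> R by rewrite pnatr_eq0 -lt0n.
split=> [t | t j].
  split=> [i | /=]; first by rewrite /= divr_ge0 ?ler0n // ltW ?push_sum_y_gt0.
  by rewrite -mulr_suml push_sum_y_total divff.
by under eq_bigr do rewrite mulrAC; rewrite -mulr_suml -push_sum_y_balance.
Qed.

Lemma absolute_ratio_backward pi : absolute_probability_sequence (S_mat w) pi ->
  forall t j, pi t j / y t j = \sum_i w t i j * (pi t.+1 i / y t.+1 i).
Proof.
move=> [_ pi_rec] t j; rewrite pi_rec mulr_suml; apply: eq_bigr => i _.
by rewrite /S_mat; field; rewrite !gt_eqF ?push_sum_y_gt0.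
Qed.

Variables (beta : R) (L : nat).
Hypothesis beta_gt0 : 0 < beta.
Hypothesis beta_le1 : beta <= 1.
Hypothesis w_lb : forall t i j, E t j i -> beta <= w t i j.
Hypothesis connected : forall t, strongly_connected (union_rel E t L).

Lemma push_sum_y_lb t i : beta ^+ (n * L) <= y (t + n * L)%N i.
Proof.
have y_ge0 s k : 0 <= y s k by exact: ltW (push_sum_y_gt0 s k).
have reach_lb (j : 'I_n) : beta ^+ (n * L) * y t j <= y (t + n * L)%N i.
  have y_rec s k : y s.+1 k = \sum_l w s k l * y s l by [].
  have := forward_reach push_weight_ge0 w_lb (ltW beta_gt0) y_ge0 y_rec.
  by apply; exact: reach_full.
have : \sum_j beta ^+ (n * L) * y t j <= \sum_(j < n) y (t + n * L)%N i.
  by apply: ler_sum => j _; exact: reach_lb.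
by rewrite -mulr_sumr push_sum_y_total sumr_const card_ord mulr_natr ler_pMn2r.
Qed.

(* The ratios pi(t) / y(t) do not depend on the agent: their spread is bounded
   by beta^-D (1 - beta^D)^m for every m. *)
Lemma absolute_ratio_flat pi : absolute_probability_sequence (S_mat w) pi ->
  forall t a b, pi t a / y t a <= pi t b / y t b.
Proof.
move=> pi_abs t a b; set z := fun s i => pi s i / y s i.
have z_rec : forall s j, z s j = \sum_i w s i j * z s.+1 i.
  exact: absolute_ratio_backward.
set D := (n * L)%N.
set g := beta ^+ D; have g_gt0 : 0 < g by rewrite exprn_gt0.
have g_le1 : g <= 1 by rewrite exprn_ile1 // ltW.
have y_gt0 := push_sum_y_gt0.
have z_ge0 s i : 0 <= z s i.
  by rewrite /z divr_ge0 ?(ltW (y_gt0 _ _)) //; case: (pi_abs.1 s).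
have z_le s i : z (s + D)%N i <= g^-1.
  have [pi_ge0 pi_sum] := pi_abs.1 (s + D)%N.
  have pi_le1 : pi (s + D)%N i <= 1 by rewrite -pi_sum ler_sum_term.
  rewrite /z ler_pdivrMr //; apply: le_trans pi_le1 _.
  rewrite -(mulVf (lt0r_neq0 g_gt0)) ler_wpM2l ?invr_ge0 ?(ltW g_gt0) //.
  exact: push_sum_y_lb.
have spread m : z t a - z t b <= (1 - g) ^+ m * g^-1.
  have span c d : z (t + m.+1 * D)%N c - z (t + m.+1 * D)%N d <= g^-1.
    rewrite mulSnr addnA.
    by have := z_le (t + m * D)%N c; have := z_ge0 (t + m * D + D)%N d; lra.
  apply: le_trans (backward_contract_iter push_weight_ge0 push_weight_col w_lb
    (ltW beta_gt0) n_gt0 beta_le1 (reach_full self_loop connected) z_rec span a b) _.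
  rewrite exprS ler_wpM2r ?invr_ge0 ?(ltW g_gt0) // ler_piMl ?exprn_ge0 ?subr_ge0 //.
  by rewrite lerBlDr lerDl ltW.
by rewrite -subr_le0; apply: geometric_squeeze g_gt0 g_le1 spread.
Qed.

(* Uniqueness: the common ratio is 1 / n since pi(t) and y(t) / n are
   both stochastic. *)
Lemma absolute_unique pi : absolute_probability_sequence (S_mat w) pi ->
  forall t i, pi t i = y t i / n%:R.
Proof.
move=> pi_abs t i; set c := pi t i / y t i.
have y_neq0 s k : y s k != 0 by rewrite gt_eqF ?push_sum_y_gt0.
have pi_prop a : pi t a = c * y t a.
  have ratio_eq : pi t a / y t a = c.
    by apply/eqP; rewrite eq_le !absolute_ratio_flat.
  by rewrite -ratio_eq divfK.
have c_n : c * n%:R = 1.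
  rewrite -(push_sum_y_total t) mulr_sumr -(pi_abs.1 t).2.
  by apply: eq_bigr => a _; rewrite pi_prop.
have n_neq0 : n%:R != 0 :> R by rewrite pnatr_eq0 -lt0n.
by rewrite pi_prop mulrC; congr (_ * _); apply: (mulIf n_neq0); rewrite c_n mulVf.
Qed.

End PushSum.

Unset Implicit Arguments.
Theorem proposition2 (R : realType) (n : nat) (E : graph_seq n)
  (w : nat -> 'I_n -> 'I_n -> R) :
  (0 < n)%N ->
  (forall t (i : 'I_n), E t i i) ->
  (forall t (i j : 'I_n), E t j i -> 0 < w t i j) ->
  (forall t (i j : 'I_n), ~~ E t j i -> w t i j = 0) ->
  (exists2 beta : R, 0 < beta &
     forall t (i j : 'I_n), E t j i -> beta <= w t i j) ->
  (forall t (i : 'I_n), \sum_(k | E t i k) w t k i = 1) ->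
  uniformly_strongly_connected E ->
  [/\ absolute_probability_sequence (S_mat w)
        (fun t i => push_sum_y w t i / n%:R),
      (forall pi : nat -> 'I_n -> R,
         absolute_probability_sequence (S_mat w) pi ->
         forall t i, pi t i = push_sum_y w t i / n%:R)
    & (forall t (j : 'I_n),
         push_sum_y w t j = \sum_i push_sum_y w t.+1 i * S_mat w t i j)].
Proof.
move=> n_gt0 self_loop w_pos w_zero [beta0 beta0_gt0 w_lb0] w_colE [L [_ connected]].
pose beta := Num.min beta0 1.
have beta_gt0 : 0 < beta by rewrite lt_min beta0_gt0 ltr01.
have beta_le1 : beta <= 1 by rewrite ge_min lexx orbT.
have w_lb t i j : E t j i -> beta <= w t i j.
  by move=> Eji; rewrite ge_min w_lb0.
split.
- exact (push_sum_absolute self_loop w_pos w_zero w_colE n_gt0).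
- exact (absolute_unique self_loop w_pos w_zero w_colE n_gt0
           beta_gt0 beta_le1 w_lb connected).
- exact (push_sum_y_balance self_loop w_pos w_zero w_colE).
Qed.
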